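(* Let $(x_n)_{n\ge0}$ be an infinite path in $\Gamma$ with $\ell(x_n)=n$. If $\sum_{n=1}^\infty \frac{1}{\lambda_{x_n}}=\infty$, then $J$ with domain $\mathcal F(\Gamma)$ is essentially selfadjoint in $\ell^2(\Gamma)$.
   Context: Let $\Gamma$ be an infinite connected tree whose vertices are arranged in levels $\ell(x)\in\{0,1,2,\dots\}$: every vertex $x$ is adjacent to exactly one vertex $x'$ with $\ell(x')=\ell(x)+1$; for $\ell(x)\ge 1$ the set $N_x=\{y:\ y'=x\}$ of neighbours of $x$ on level $\ell(x)-1$ is finite and nonempty; $N_x=\emptyset$ if $\ell(x)=0$; there are no other edges. Fix $\lambda_x>0$, $\beta_x\in\mathbb R$. The Jacobi matrix $J$ acts on functions $v:\Gamma\to\mathbb C$ by $(Jv)(x)=\lambda_x v(x')+\beta_x v(x)+\sum_{y\in N_x}\lambda_y v(y)$. $\mathcal F(\Gamma)$ denotes the finitely supported functions; $J$ with domain $\mathcal F(\Gamma)$ is symmetric in $\ell^2(\Gamma)$. *)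

From Stdlib Require Import Reals List Relations.
Open Scope R_scope.

Definition C : Type := (R * R)%type.
Definition C0 : C := (0, 0).
Definition Cadd (a b : C) : C := (fst a + fst b, snd a + snd b).
Definition Copp (a : C) : C := (- fst a, - snd a).
Definition Csub (a b : C) : C := Cadd a (Copp b).
Definition Cmul (a b : C) : C :=
  (fst a * fst b - snd a * snd b, fst a * snd b + snd a * fst b).
Definition Cconj (a : C) : C := (fst a, - snd a).
Definition Cscal (r : R) (a : C) : C := (r * fst a, r * snd a).
Definition Cnorm2 (a : C) : R := fst a * fst a + snd a * snd a.

Section Sums.
Variable V : Type.

Definition csum (l : list V) (f : V -> C) : C :=
  fold_right (fun x acc => Cadd (f x) acc) C0 l.
Definition rsum (l : list V) (g : V -> R) : R :=
  fold_right (fun x acc => g x + acc) 0 l.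

(** unconditional summation over V: the net of finite partial sums
    (indexed by finite subsets, i.e. duplicate-free lists) converges to c *)
Definition has_sum (f : V -> C) (c : C) : Prop :=
  forall eps, 0 < eps -> exists l0, NoDup l0 /\
    forall l, NoDup l -> incl l0 l -> Cnorm2 (Csub (csum l f) c) < eps.

Definition l2 (u : V -> C) : Prop :=
  exists M, forall l, NoDup l -> rsum l (fun x => Cnorm2 (u x)) <= M.

Definition norm2_le (f : V -> C) (eps : R) : Prop :=
  forall l, NoDup l -> rsum l (fun x => Cnorm2 (f x)) <= eps.

Definition inner (u w : V -> C) (c : C) : Prop :=
  has_sum (fun x => Cmul (u x) (Cconj (w x))) c.

Definition finsupp (v : V -> C) : Prop :=
  exists l, forall x, ~ In x l -> v x = C0.

(** operators are represented by their graphs *)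
Definition graph : Type := (V -> C) -> (V -> C) -> Prop.

Definition closure (G : graph) : graph := fun u w =>
  l2 u /\ l2 w /\
  forall eps, 0 < eps -> exists v z, G v z /\
     norm2_le (fun x => Csub (u x) (v x)) eps /\
     norm2_le (fun x => Csub (w x) (z x)) eps.

Definition adjoint (G : graph) : graph := fun u w =>
  l2 u /\ l2 w /\
  forall v z, G v z -> forall c1 c2, inner z u c1 -> inner v w c2 -> c1 = c2.

Definition selfadjoint (G : graph) : Prop :=
  forall u w, adjoint G u w <-> G u w.

Definition ess_selfadjoint (G : graph) : Prop := selfadjoint (closure G).

End Sums.

Arguments csum {V}. Arguments rsum {V}. Arguments has_sum {V}. Arguments l2 {V}.
Arguments norm2_le {V}. Arguments inner {V}. Arguments finsupp {V}.
Arguments closure {V}. Arguments adjoint {V}. Arguments selfadjoint {V}.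
Arguments ess_selfadjoint {V}.

(** The Jacobi matrix on the tree: x' = parent x, N_x = children x. *)
Definition jacobi {V : Type} (parent : V -> V) (children : V -> list V)
  (lam beta : V -> R) (v : V -> C) (x : V) : C :=
  Cadd (Cadd (Cscal (lam x) (v (parent x))) (Cscal (beta x) (v x)))
       (csum (children x) (fun y => Cscal (lam y) (v y))).

Definition jacobi_graph {V : Type} (parent : V -> V) (children : V -> list V)
  (lam beta : V -> R) : (V -> C) -> (V -> C) -> Prop :=
  fun v w => finsupp v /\ forall x, w x = jacobi parent children lam beta v x.

Definition tree_adj {V : Type} (parent : V -> V) (x y : V) : Prop :=
  parent x = y \/ parent y = x.

(* The Jacobi matrix is symmetric on finitely supported functions, so the closure of its graph
   is symmetric, and it remains to show that every pair (u, w) in the graph of the adjoint of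
   the closure lies in the closure. Testing against delta functions gives w = J u pointwise.
   Now cut u off by a function phi which is 1 on the subtree below x_M, vanishes outside the
   subtree below x_(N+1), is constant along every edge off the path (x_n), and drops by
   c / lambda_(x_m) from x_(m-1) to x_m. Then phi u is finitely supported, phi u -> u, and the
   commutator J (phi u) - phi J u lives on the path, where it is bounded by c times the
   neighbouring values of u. A total drop of 1 forces c = 1 / sum_(M+1 < m <= N+1) 1/lambda_(x_m),
   which tends to 0 as N grows precisely because sum 1/lambda_(x_n) diverges. *)

From Pilot Require Import Defs.
From Stdlib Require Import Reals List Relations Lra Lia Psatz Permutation ClassicalEpsilon Arith.
Import ListNotations.
Open Scope R_scope.

Definition eq_dec_classic {V : Type} (x y : V) : {x = y} + {x <> y} :=
  excluded_middle_informative (x = y).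

Definition inb {V : Type} (l : list V) (x : V) : bool :=
  if in_dec eq_dec_classic x l then true else false.

Lemma inb_true {V : Type} (l : list V) x : inb l x = true <-> In x l.
Proof. unfold inb; destruct (in_dec eq_dec_classic x l); split; auto; discriminate. Qed.

Lemma inb_false {V : Type} (l : list V) x : inb l x = false <-> ~ In x l.
Proof. unfold inb; destruct (in_dec eq_dec_classic x l); split; auto; try discriminate; tauto. Qed.

Lemma Rabs_le_bounds (x b : R) : Rabs x <= b -> - b <= x <= b.
Proof. unfold Rabs; destruct (Rcase_abs x); intros; lra. Qed.

Lemma R_eq_of_abs_le (a b : R) : (forall eps, 0 < eps -> Rabs (a - b) <= eps) -> a = b.
Proof.
  intros H. destruct (Req_dec a b) as [|Hne]; auto.
  assert (P : 0 < Rabs (a - b)) by (apply Rabs_pos_lt; lra).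
  specialize (H (Rabs (a - b) / 2) ltac:(lra)). lra.
Qed.

Lemma mul_le_amgm x y t : 0 < t -> x * y <= (t * (x * x) + / t * (y * y)) / 2.
Proof.
  intros Ht.
  assert (E : t * ((x - / t * y) * (x - / t * y)) = t * (x * x) + / t * (y * y) - 2 * (x * y))
    by (field; lra).
  assert (0 <= t * ((x - / t * y) * (x - / t * y))) by (apply Rmult_le_pos; [lra | apply Rle_0_sqr]).
  lra.
Qed.

Lemma C_ext (a b : Defs.C) : fst a = fst b -> snd a = snd b -> a = b.
Proof. destruct a, b; simpl; intros; subst; reflexivity. Qed.

Ltac Cunfold := unfold Cadd, Csub, Copp, Cmul, Cconj, Cscal, C0, Cnorm2 in *.
Ltac Cring := apply C_ext; Cunfold; simpl; ring.

Definition Cpart (re : bool) (a : Defs.C) : R := if re then fst a else snd a.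

Lemma C_ext_Cpart (a b : Defs.C) : (forall re, Cpart re a = Cpart re b) -> a = b.
Proof. intros H. apply C_ext; [apply (H true) | apply (H false)]. Qed.

Lemma Cnorm2_ge0 a : 0 <= Cnorm2 a.
Proof. unfold Cnorm2. nra. Qed.

Lemma Cnorm2_C0 : Cnorm2 C0 = 0.
Proof. unfold Cnorm2, C0; simpl; ring. Qed.

Lemma Cnorm2_scal r a : Cnorm2 (Cscal r a) = r * r * Cnorm2 a.
Proof. Cunfold; simpl; ring. Qed.

Lemma Cnorm2_scal_le r a d : Rabs r <= d -> Cnorm2 (Cscal r a) <= d * d * Cnorm2 a.
Proof.
  intros Hr. apply Rabs_le_bounds in Hr. rewrite Cnorm2_scal.
  apply Rmult_le_compat_r; [apply Cnorm2_ge0 | nra].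
Qed.

Lemma Cnorm2_add_le a b : Cnorm2 (Cadd a b) <= 2 * Cnorm2 a + 2 * Cnorm2 b.
Proof.
  destruct a as [a1 a2], b as [b1 b2]; Cunfold; simpl.
  pose proof (Rle_0_sqr (a1 - b1)); pose proof (Rle_0_sqr (a2 - b2)); unfold Rsqr in *; nra.
Qed.

Lemma Cnorm2_sub_le a b : Cnorm2 (Csub a b) <= 2 * Cnorm2 a + 2 * Cnorm2 b.
Proof.
  replace (Cnorm2 b) with (Cnorm2 (Copp b)) by (Cunfold; simpl; ring). apply Cnorm2_add_le.
Qed.

Lemma Cpart_close re a b eta : 0 < eta -> Cnorm2 (Csub a b) < eta * eta ->
  Rabs (Cpart re a - Cpart re b) < eta.
Proof.
  intros He H. rewrite <- (Rabs_pos_eq eta) by lra. apply Rsqr_lt_abs_0.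
  destruct a as [a1 a2], b as [b1 b2]; Cunfold; unfold Rsqr; simpl in *.
  pose proof (Rle_0_sqr (a1 - b1)); pose proof (Rle_0_sqr (a2 - b2)); unfold Rsqr in *.
  destruct re; simpl; nra.
Qed.

Lemma Cpart_mul_conj_le re a b t : 0 < t ->
  Rabs (Cpart re (Cmul a (Cconj b))) <= (t * Cnorm2 a + / t * Cnorm2 b) / 2.
Proof.
  intros Ht. destruct a as [a1 a2], b as [b1 b2].
  unfold Cpart, Cmul, Cconj, Cnorm2; simpl.
  pose proof (mul_le_amgm a1 b1 t Ht). pose proof (mul_le_amgm a2 b2 t Ht).
  pose proof (mul_le_amgm a1 (- b1) t Ht). pose proof (mul_le_amgm a2 (- b2) t Ht).
  pose proof (mul_le_amgm a1 b2 t Ht). pose proof (mul_le_amgm a2 b1 t Ht).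
  pose proof (mul_le_amgm a1 (- b2) t Ht). pose proof (mul_le_amgm a2 (- b1) t Ht).
  destruct re; apply Rabs_le; split; nra.
Qed.

Section FiniteSums.
Context {V : Type}.
Implicit Types (l L : list V) (f g : V -> Defs.C) (h k : V -> R).

Lemma csum_ext l f g : (forall x, In x l -> f x = g x) -> csum l f = csum l g.
Proof. induction l as [|a l IH]; simpl; intros H; auto. rewrite H, IH; auto. Qed.

Lemma csum_zero l f : (forall x, In x l -> f x = C0) -> csum l f = C0.
Proof. induction l as [|a l IH]; simpl; intros H; auto. rewrite H, IH; auto. Cring. Qed.

Lemma csum_perm l l' f : Permutation l l' -> csum l f = csum l' f.
Proof. induction 1; simpl; try congruence. Cring. Qed.

Lemma csum_add l f g : csum l (fun x => Cadd (f x) (g x)) = Cadd (csum l f) (csum l g).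
Proof. induction l; simpl. Cring. rewrite IHl. Cring. Qed.

Lemma csum_sub l f g : csum l (fun x => Csub (f x) (g x)) = Csub (csum l f) (csum l g).
Proof. induction l; simpl. Cring. rewrite IHl. Cring. Qed.

Lemma csum_mull l a f : csum l (fun x => Cmul a (f x)) = Cmul a (csum l f).
Proof. induction l; simpl. Cring. rewrite IHl. Cring. Qed.

Lemma csum_mulr l f a : csum l (fun x => Cmul (f x) a) = Cmul (csum l f) a.
Proof. induction l; simpl. Cring. rewrite IHl. Cring. Qed.

Lemma csum_scal l r f : csum l (fun x => Cscal r (f x)) = Cscal r (csum l f).
Proof. induction l; simpl. Cring. rewrite IHl. Cring. Qed.

Lemma csum_conj l f : csum l (fun x => Cconj (f x)) = Cconj (csum l f).
Proof. induction l; simpl. Cring. rewrite IHl. Cring. Qed.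

Lemma Cpart_csum re l f : Cpart re (csum l f) = rsum l (fun x => Cpart re (f x)).
Proof. induction l; simpl. destruct re; reflexivity. rewrite <- IHl. destruct re; reflexivity. Qed.

Lemma csum_exchange l1 l2 (F : V -> V -> Defs.C) :
  csum l1 (fun x => csum l2 (F x)) = csum l2 (fun y => csum l1 (fun x => F x y)).
Proof.
  induction l1 as [|a l1 IH]; simpl.
  - symmetry; apply csum_zero; auto.
  - rewrite IH, <- csum_add. reflexivity.
Qed.

Lemma csum_filter l f (p : V -> bool) :
  (forall x, In x l -> p x = false -> f x = C0) -> csum l f = csum (filter p l) f.
Proof.
  induction l as [|a l IH]; simpl; intros H; auto.
  destruct (p a) eqn:E; simpl; rewrite IH; auto. rewrite H; auto. Cring.
Qed.

Lemma csum_supp_eq l L f : NoDup l -> NoDup L ->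
  (forall x, ~ In x l -> f x = C0) -> (forall x, ~ In x L -> f x = C0) ->
  csum l f = csum L f.
Proof.
  intros Nl NL Hl HL.
  rewrite (csum_filter l f (inb L)) by (intros x _ E; apply HL, inb_false, E).
  rewrite (csum_filter L f (inb l)) by (intros x _ E; apply Hl, inb_false, E).
  apply csum_perm, NoDup_Permutation; try apply NoDup_filter; auto.
  intro x; rewrite !filter_In, !inb_true. tauto.
Qed.

Lemma csum_single l f a : NoDup l -> In a l ->
  (forall x, In x l -> x <> a -> f x = C0) -> csum l f = f a.
Proof.
  intros Nl Ha H.
  rewrite (csum_ext l f (fun x => if eq_dec_classic x a then f x else C0))
    by (intros x Hx; destruct (eq_dec_classic x a); auto).
  rewrite (csum_supp_eq l [a]); simpl.
  - destruct (eq_dec_classic a a); [Cring | congruence].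
  - exact Nl.
  - repeat constructor; auto.
  - intros x Hx. destruct (eq_dec_classic x a); subst; tauto.
  - intros x Hx. destruct (eq_dec_classic x a); subst; tauto.
Qed.

Lemma rsum_app l1 l2 h : rsum (l1 ++ l2) h = rsum l1 h + rsum l2 h.
Proof. induction l1; simpl. ring. rewrite IHl1. ring. Qed.

Lemma rsum_ext l h k : (forall x, In x l -> h x = k x) -> rsum l h = rsum l k.
Proof. induction l as [|a l IH]; simpl; intros H; auto. rewrite H, IH; auto. Qed.

Lemma rsum_le l h k : (forall x, In x l -> h x <= k x) -> rsum l h <= rsum l k.
Proof.
  induction l as [|a l IH]; simpl; intros H. lra.
  assert (rsum l h <= rsum l k) by (apply IH; auto).
  specialize (H a (or_introl eq_refl)). lra.
Qed.

Lemma rsum_ge0 l h : (forall x, In x l -> 0 <= h x) -> 0 <= rsum l h.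
Proof.
  induction l as [|a l IH]; simpl; intros H. lra.
  assert (0 <= rsum l h) by (apply IH; auto).
  specialize (H a (or_introl eq_refl)). lra.
Qed.

Lemma rsum_perm l l' h : Permutation l l' -> rsum l h = rsum l' h.
Proof. induction 1; simpl; try congruence. ring. Qed.

Lemma rsum_plus l h k : rsum l (fun x => h x + k x) = rsum l h + rsum l k.
Proof. induction l; simpl. ring. rewrite IHl. ring. Qed.

Lemma rsum_scal l r h : rsum l (fun x => r * h x) = r * rsum l h.
Proof. induction l; simpl. ring. rewrite IHl. ring. Qed.

Lemma rsum_minus l h k : rsum l (fun x => h x - k x) = rsum l h - rsum l k.
Proof. induction l; simpl. ring. rewrite IHl. ring. Qed.

Lemma rsum_abs_le l h k : (forall x, In x l -> Rabs (h x) <= k x) -> Rabs (rsum l h) <= rsum l k.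
Proof.
  intros H. apply Rabs_le. split.
  - replace (- rsum l k) with (rsum l (fun x => -1 * k x)) by (rewrite rsum_scal; ring).
    apply rsum_le. intros x Hx. specialize (H x Hx); apply Rabs_le_bounds in H. lra.
  - apply rsum_le. intros x Hx. specialize (H x Hx); apply Rabs_le_bounds in H. lra.
Qed.

Lemma rsum_filter l h (p : V -> bool) :
  (forall x, In x l -> p x = false -> h x = 0) -> rsum l h = rsum (filter p l) h.
Proof.
  induction l as [|a l IH]; simpl; intros H; auto.
  destruct (p a) eqn:E; simpl; rewrite IH; auto. rewrite H; auto. ring.
Qed.

Lemma rsum_partition l L h : NoDup l -> NoDup L -> incl l L ->
  rsum L h = rsum l h + rsum (filter (fun x => negb (inb l x)) L) h.
Proof.
  intros Nl NL Hincl. rewrite <- rsum_app. apply rsum_perm, Permutation_sym, NoDup_Permutation.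
  - apply NoDup_app; auto using NoDup_filter.
    intros x Hx Hf. apply filter_In in Hf as [_ Hf].
    apply Bool.negb_true_iff, inb_false in Hf. tauto.
  - exact NL.
  - intro x. rewrite in_app_iff, filter_In, Bool.negb_true_iff, inb_false. split.
    + intros [Hx | [Hx _]]; auto.
    + intro Hx. destruct (classic (In x l)); auto.
Qed.

Lemma rsum_supp_le l L h : NoDup l -> NoDup L -> (forall x, 0 <= h x) ->
  (forall x, In x l -> ~ In x L -> h x = 0) -> rsum l h <= rsum L h.
Proof.
  intros Nl NL Hh HL.
  rewrite (rsum_filter l h (inb L)) by (intros x Hx E; apply HL, inb_false; auto).
  rewrite (rsum_partition (filter (inb L) l) L h); auto using NoDup_filter.
  - assert (0 <= rsum (filter (fun x => negb (inb (filter (inb L) l) x)) L) h)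
      by (apply rsum_ge0; auto). lra.
  - intros x Hx. apply filter_In in Hx as [_ Hx]. apply inb_true, Hx.
Qed.

(* The least upper bound of the finite partial sums is almost attained by one of them. *)
Lemma summable_concentrated h B : (forall x, 0 <= h x) ->
  (forall l, NoDup l -> rsum l h <= B) ->
  forall eps, 0 < eps -> exists l0,
    forall l, NoDup l -> (forall x, In x l -> ~ In x l0) -> rsum l h <= eps.
Proof.
  intros Hh HB eps He.
  set (E := fun r => exists l, NoDup l /\ r = rsum l h).
  destruct (completeness E) as [S [HS1 HS2]].
  { exists B. intros r [l [Nl ->]]. auto. }
  { exists 0, []. split; [constructor | reflexivity]. }
  destruct (classic (exists l, NoDup l /\ S - eps < rsum l h)) as [[l0 [N0 H0]] | Hn].
  2:{ exfalso. assert (S <= S - eps); [|lra]. apply HS2. intros r [l [Nl ->]].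
      destruct (Rle_or_lt (rsum l h) (S - eps)); auto. exfalso; eauto. }
  exists l0. intros l Nl Hdisj.
  assert (Hl : rsum (l ++ l0) h <= S).
  { apply HS1. exists (l ++ l0). split; auto. apply NoDup_app; auto. }
  rewrite rsum_app in Hl. lra.
Qed.

End FiniteSums.

Lemma sum_shift_le (f : nat -> R) B n : (forall k, 0 <= f k) -> (forall n, sum_f_R0 f n <= B) ->
  sum_f_R0 (fun k => f (S k)) n <= B.
Proof.
  intros Hf HB. specialize (HB (S n)). rewrite decomp_sum in HB by lia.
  specialize (Hf 0%nat). cbn [Nat.pred] in HB. lra.
Qed.

Lemma sum_pred_le (f : nat -> R) B n : (forall k, 0 <= f k) -> (forall n, sum_f_R0 f n <= B) ->
  sum_f_R0 (fun k => match k with O => 0 | S j => f j end) n <= B.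
Proof.
  intros Hf HB. destruct n as [|n].
  - specialize (HB 0%nat). specialize (Hf 0%nat). simpl in *. lra.
  - rewrite decomp_sum by lia. cbn [Nat.pred]. rewrite Rplus_0_l. apply HB.
Qed.

Section SquareSummable.
Context {V : Type}.
Implicit Types (l L : list V) (f a b : V -> Defs.C).

Lemma has_sum_finite L f : NoDup L -> (forall x, ~ In x L -> f x = C0) -> has_sum f (csum L f).
Proof.
  intros NL HL eps He. exists L. split; auto. intros l Nl Hincl.
  rewrite (csum_supp_eq l L f); auto.
  replace (Csub (csum L f) (csum L f)) with C0 by Cring. rewrite Cnorm2_C0. exact He.
Qed.

Lemma l2_finite L f : (forall x, ~ In x L -> f x = C0) -> l2 f.
Proof.
  intros HL. exists (rsum (nodup eq_dec_classic L) (fun x => Cnorm2 (f x))). intros l Nl.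
  apply rsum_supp_le; auto using NoDup_nodup, Cnorm2_ge0.
  intros x _ Hx. rewrite HL, Cnorm2_C0; auto. rewrite <- nodup_In; exact Hx.
Qed.

Lemma norm2_le_sub_diag f eps : 0 <= eps -> norm2_le (fun x => Csub (f x) (f x)) eps.
Proof.
  intros He l _. rewrite (rsum_ext _ _ (fun _ => 0 * 0)).
  - rewrite rsum_scal. lra.
  - intros x _. replace (Csub (f x) (f x)) with C0 by Cring. rewrite Cnorm2_C0. ring.
Qed.

Lemma l2_bound f : l2 f ->
  exists M, 0 <= M /\ forall l, NoDup l -> rsum l (fun x => Cnorm2 (f x)) <= M.
Proof. intros [M HM]. exists M. split; auto. apply (HM [] (NoDup_nil _)). Qed.

Lemma rsum_Cnorm2_approx_le l a b :
  rsum l (fun x => Cnorm2 (b x)) <=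
  2 * rsum l (fun x => Cnorm2 (a x)) + 2 * rsum l (fun x => Cnorm2 (Csub (a x) (b x))).
Proof.
  rewrite <- !rsum_scal, <- rsum_plus. apply rsum_le. intros x _.
  replace (b x) with (Csub (a x) (Csub (a x) (b x))) at 1 by Cring. apply Cnorm2_sub_le.
Qed.

Lemma rsum_Cpart_mul_le re l a b t : 0 < t ->
  Rabs (rsum l (fun x => Cpart re (Cmul (a x) (Cconj (b x))))) <=
  (t * rsum l (fun x => Cnorm2 (a x)) + / t * rsum l (fun x => Cnorm2 (b x))) / 2.
Proof.
  intros Ht.
  replace ((t * rsum l (fun x => Cnorm2 (a x)) + / t * rsum l (fun x => Cnorm2 (b x))) / 2)
    with (rsum l (fun x => (t * Cnorm2 (a x) + / t * Cnorm2 (b x)) / 2))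
    by (induction l as [|x l IH]; simpl; [|rewrite IH]; field; lra).
  apply rsum_abs_le. intros x _. apply Cpart_mul_conj_le, Ht.
Qed.

(* Splitting [a conj b - a' conj b'] as [(a - a') conj b + a' conj (b - b')], each term is
   bounded by weighted AM-GM with weight [(M + 1) / eta], resp. its inverse. *)
Lemma rsum_Cpart_mul_perturb re l a a' b b' M eta : 0 < eta -> 0 <= M ->
  rsum l (fun x => Cnorm2 (Csub (a x) (a' x))) <= eta * eta / (M + 1) ->
  rsum l (fun x => Cnorm2 (Csub (b x) (b' x))) <= eta * eta / (M + 1) ->
  rsum l (fun x => Cnorm2 (b x)) <= M -> rsum l (fun x => Cnorm2 (a' x)) <= M ->
  Rabs (rsum l (fun x => Cpart re (Cmul (a x) (Cconj (b x)))) -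
        rsum l (fun x => Cpart re (Cmul (a' x) (Cconj (b' x))))) <= 2 * eta.
Proof.
  intros He HM Ha Hb HB HA.
  assert (Hsplit : rsum l (fun x => Cpart re (Cmul (a x) (Cconj (b x)))) -
                   rsum l (fun x => Cpart re (Cmul (a' x) (Cconj (b' x)))) =
    rsum l (fun x => Cpart re (Cmul (Csub (a x) (a' x)) (Cconj (b x)))) +
    rsum l (fun x => Cpart re (Cmul (a' x) (Cconj (Csub (b x) (b' x)))))).
  { rewrite <- rsum_minus, <- rsum_plus. apply rsum_ext; intros.
    destruct re; Cunfold; simpl; ring. }
  assert (Hsmall : forall r, r <= eta * eta / (M + 1) -> (M + 1) / eta * r <= eta).
  { intros r Hr. apply Rle_trans with ((M + 1) / eta * (eta * eta / (M + 1))).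
    - apply Rmult_le_compat_l; [apply Rlt_le, Rdiv_lt_0_compat|]; lra.
    - right; field; lra. }
  assert (Hlarge : forall r, r <= M -> eta / (M + 1) * r <= eta).
  { intros r Hr. apply Rle_trans with (eta / (M + 1) * (M + 1)).
    - apply Rmult_le_compat_l; [apply Rlt_le, Rdiv_lt_0_compat|]; lra.
    - right; field; lra. }
  pose proof (rsum_Cpart_mul_le re l (fun x => Csub (a x) (a' x)) b ((M + 1) / eta)
    ltac:(apply Rdiv_lt_0_compat; lra)) as T1.
  pose proof (rsum_Cpart_mul_le re l a' (fun x => Csub (b x) (b' x)) (eta / (M + 1))
    ltac:(apply Rdiv_lt_0_compat; lra)) as T2.
  rewrite Rinv_div in T1, T2.
  specialize (Hsmall _ Ha) as Ha'. specialize (Hsmall _ Hb) as Hb'.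
  specialize (Hlarge _ HB) as HB'. specialize (Hlarge _ HA) as HA'.
  rewrite Hsplit. eapply Rle_trans; [apply Rabs_triang|]. lra.
Qed.

End SquareSummable.

Section SymmetricClosure.
Context {V : Type} (G : graph V).

Hypothesis G_symmetric : forall v1 z1 v2 z2, G v1 z1 -> G v2 z2 ->
  exists L, forall l, NoDup l -> incl L l ->
    csum l (fun x => Cmul (z2 x) (Cconj (v1 x))) = csum l (fun x => Cmul (v2 x) (Cconj (z1 x))).

(* For [(u, w), (v, z)] in the closure, approximate both by graph elements [(v1, z1)],
   [(v2, z2)]; then [<z, u> ~ <z2, v1> = <v2, z1> ~ <v, w>] on a large enough finite set. *)
Lemma closure_sub_adjoint u w : closure G u w -> adjoint (closure G) u w.
Proof.
  intros [Hu [Hw Happ]]. split; [exact Hu | split; [exact Hw |]].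
  intros v z [Hv [Hz Happ']] c1 c2 I1 I2.
  destruct (l2_bound u Hu) as [Bu [Bu0 HBu]], (l2_bound w Hw) as [Bw [Bw0 HBw]],
    (l2_bound v Hv) as [Bv [Bv0 HBv]], (l2_bound z Hz) as [Bz [Bz0 HBz]].
  set (M := 2 * (Bu + Bv + Bw + Bz) + 2).
  apply C_ext_Cpart; intro re. apply R_eq_of_abs_le; intros eps He.
  set (eta := eps / 6).
  set (delta := Rmin 1 (eta * eta / (M + 1))).
  assert (Hdelta : 0 < delta) by (apply Rmin_glb_lt; [lra | apply Rdiv_lt_0_compat; unfold eta, M; nra]).
  assert (Hdelta1 : delta <= 1) by apply Rmin_l.
  assert (Hdelta2 : delta <= eta * eta / (M + 1)) by apply Rmin_r.
  destruct (Happ delta Hdelta) as (v1 & z1 & G1 & Nu & Nw).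
  destruct (Happ' delta Hdelta) as (v2 & z2 & G2 & Nv & Nz).
  destruct (G_symmetric v1 z1 v2 z2 G1 G2) as [L HL].
  destruct (I1 (eta * eta) ltac:(unfold eta; nra)) as (l1 & _ & S1).
  destruct (I2 (eta * eta) ltac:(unfold eta; nra)) as (l2 & _ & S2).
  set (l := nodup eq_dec_classic (l1 ++ l2 ++ L)).
  assert (Nl : NoDup l) by apply NoDup_nodup.
  assert (Hl : forall x, In x (l1 ++ l2 ++ L) -> In x l) by (intros; apply nodup_In; auto).
  specialize (S1 l Nl ltac:(intros x Hx; apply Hl; rewrite !in_app_iff; auto)).
  specialize (S2 l Nl ltac:(intros x Hx; apply Hl; rewrite !in_app_iff; auto)).
  specialize (HL l Nl ltac:(intros x Hx; apply Hl; rewrite !in_app_iff; auto)).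
  apply (Cpart_close re) in S1, S2; try (unfold eta; lra).
  apply (f_equal (Cpart re)) in HL. rewrite !Cpart_csum in HL. rewrite Cpart_csum in S1, S2.
  specialize (Nu l Nl); specialize (Nw l Nl); specialize (Nv l Nl); specialize (Nz l Nl).
  specialize (HBu l Nl); specialize (HBw l Nl); specialize (HBv l Nl); specialize (HBz l Nl).
  assert (P1 := rsum_Cpart_mul_perturb re l z z2 u v1 M eta).
  assert (P2 := rsum_Cpart_mul_perturb re l v v2 w z1 M eta).
  assert (A1 := rsum_Cnorm2_approx_le l z z2).
  assert (A2 := rsum_Cnorm2_approx_le l v v2).
  assert (HM : 0 <= M) by (unfold M; lra).
  assert (Heta : 0 < eta) by (unfold eta; lra).
  specialize (P1 Heta HM ltac:(lra) ltac:(lra) ltac:(unfold M; lra) ltac:(unfold M; lra)).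
  specialize (P2 Heta HM ltac:(lra) ltac:(lra) ltac:(unfold M; lra) ltac:(unfold M; lra)).
  apply Rabs_le_bounds in P1, P2. apply Rabs_def2 in S1, S2.
  apply Rabs_le. unfold eta in *. lra.
Qed.

End SymmetricClosure.

Section Jacobi.
Context {V : Type} (parent : V -> V) (children : V -> list V) (lam beta : V -> R).
Hypothesis children_spec : forall x y, In y (children x) <-> parent y = x.
Hypothesis children_NoDup : forall x, NoDup (children x).

Notation jac := (jacobi parent children lam beta).
Notation Gr := (jacobi_graph parent children lam beta).

Definition jacobi_entry (x y : V) : R :=
  (if eq_dec_classic y (parent x) then lam x else 0) +
  (if eq_dec_classic x y then beta x else 0) +
  (if eq_dec_classic x (parent y) then lam y else 0).

Lemma jacobi_entry_sym x y : jacobi_entry x y = jacobi_entry y x.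
Proof.
  unfold jacobi_entry.
  destruct (eq_dec_classic y (parent x)), (eq_dec_classic x y), (eq_dec_classic x (parent y)),
    (eq_dec_classic y x); subst; try congruence; ring.
Qed.

Definition neighbours (x : V) : list V := nodup eq_dec_classic (x :: parent x :: children x).

Lemma jacobi_entry_out x y : ~ In y (neighbours x) -> jacobi_entry x y = 0.
Proof.
  unfold neighbours, jacobi_entry. rewrite nodup_In. intro Hy.
  destruct (eq_dec_classic y (parent x)); [subst; exfalso; apply Hy; simpl; auto|].
  destruct (eq_dec_classic x y); [subst; exfalso; apply Hy; simpl; auto|].
  destruct (eq_dec_classic x (parent y)); [exfalso; apply Hy; simpl; right; right; apply children_spec; auto|].
  ring.
Qed.

Lemma jacobi_neighbours v x : jac v x = csum (neighbours x) (fun y => Cscal (jacobi_entry x y) (v y)).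
Proof.
  assert (N : NoDup (neighbours x)) by apply NoDup_nodup.
  assert (Hin : forall y, In y (x :: parent x :: children x) -> In y (neighbours x))
    by (intros; apply nodup_In; auto).
  unfold jacobi_entry.
  rewrite (csum_ext _ _ (fun y => Cadd (Cadd
     (Cscal (if eq_dec_classic y (parent x) then lam x else 0) (v y))
     (Cscal (if eq_dec_classic x y then beta x else 0) (v y)))
     (Cscal (if eq_dec_classic x (parent y) then lam y else 0) (v y)))) by (intros; Cring).
  rewrite !csum_add. unfold jacobi. f_equal; [f_equal|].
  - rewrite (csum_single _ _ (parent x)); [| exact N | apply Hin; simpl; auto |].
    + destruct (eq_dec_classic (parent x) (parent x)); [reflexivity | congruence].
    + intros y _ Hy. destruct (eq_dec_classic y (parent x)); [congruence | Cring].
  - rewrite (csum_single _ _ x); [| exact N | apply Hin; simpl; auto |].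
    + destruct (eq_dec_classic x x); [reflexivity | congruence].
    + intros y _ Hy. destruct (eq_dec_classic x y); [congruence | Cring].
  - rewrite (csum_supp_eq (neighbours x) (children x)); auto.
    + apply csum_ext. intros y Hy. apply children_spec in Hy.
      destruct (eq_dec_classic x (parent y)); [reflexivity | congruence].
    + intros y Hy. destruct (eq_dec_classic x (parent y)); [|Cring].
      exfalso; apply Hy, Hin; simpl; right; right; apply children_spec; auto.
    + intros y Hy. destruct (eq_dec_classic x (parent y)); [|Cring].
      exfalso; apply Hy, children_spec; auto.
Qed.

Lemma jacobi_as_sum v x L : NoDup L -> (forall y, ~ In y L -> v y = C0) ->
  jac v x = csum L (fun y => Cscal (jacobi_entry x y) (v y)).
Proof.
  intros NL HL. rewrite jacobi_neighbours. apply csum_supp_eq; [apply NoDup_nodup | exact NL | |].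
  - intros y Hy. rewrite jacobi_entry_out; auto. Cring.
  - intros y Hy. rewrite HL; auto. Cring.
Qed.

Lemma jacobi_finsupp v : finsupp v -> finsupp (jac v).
Proof.
  intros [L HL]. exists (L ++ map parent L ++ flat_map children L).
  intros x Hx. rewrite jacobi_neighbours. apply csum_zero. intros y Hy.
  unfold neighbours in Hy. rewrite nodup_In in Hy.
  rewrite HL; [Cring|]. intro HyL. apply Hx. rewrite !in_app_iff, in_map_iff, in_flat_map.
  destruct Hy as [<- | [<- | Hy]]; auto.
  - right; right. exists (parent x). split; auto. apply children_spec; auto.
  - right; left. exists y. split; auto. apply children_spec; auto.
Qed.

Lemma jacobi_symmetric l a b : NoDup l ->
  (forall y, ~ In y l -> a y = C0) -> (forall y, ~ In y l -> b y = C0) ->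
  csum l (fun x => Cmul (jac a x) (Cconj (b x))) = csum l (fun x => Cmul (a x) (Cconj (jac b x))).
Proof.
  intros Nl Ha Hb.
  rewrite (csum_ext _ _ (fun x => csum l (fun y => Cmul (Cscal (jacobi_entry x y) (a y)) (Cconj (b x)))))
    by (intros x _; rewrite (jacobi_as_sum a x l), csum_mulr; auto).
  rewrite (csum_ext _ (fun x => Cmul (a x) (Cconj (jac b x)))
    (fun x => csum l (fun y => Cmul (a x) (Cconj (Cscal (jacobi_entry x y) (b y))))))
    by (intros x _; rewrite (jacobi_as_sum b x l), <- csum_conj, <- csum_mull; auto).
  rewrite csum_exchange. apply csum_ext; intros x _. apply csum_ext; intros y _.
  rewrite jacobi_entry_sym. Cring.
Qed.

Lemma jacobi_graph_symmetric v1 z1 v2 z2 : Gr v1 z1 -> Gr v2 z2 ->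
  exists L, forall l, NoDup l -> incl L l ->
    csum l (fun x => Cmul (z2 x) (Cconj (v1 x))) = csum l (fun x => Cmul (v2 x) (Cconj (z1 x))).
Proof.
  intros [[L1 HL1] Hz1] [[L2 HL2] Hz2]. exists (L1 ++ L2). intros l Nl Hincl.
  rewrite (csum_ext _ _ (fun x => Cmul (jac v2 x) (Cconj (v1 x)))) by (intros; rewrite Hz2; auto).
  rewrite (csum_ext _ (fun x => Cmul (v2 x) (Cconj (z1 x))) (fun x => Cmul (v2 x) (Cconj (jac v1 x))))
    by (intros; rewrite Hz1; auto).
  apply jacobi_symmetric; auto; intros y Hy;
    [apply HL2 | apply HL1]; intro; apply Hy, Hincl, in_or_app; auto.
Qed.

Lemma jacobi_graph_closure v : finsupp v -> closure Gr v (jac v).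
Proof.
  intros Hv. pose proof (jacobi_finsupp v Hv) as [L' HL']. pose proof Hv as [L HL].
  split; [apply (l2_finite L); auto | split; [apply (l2_finite L'); auto |]].
  intros eps He. exists v, (jac v). split; [split; auto |].
  split; apply norm2_le_sub_diag; lra.
Qed.

(* Testing against the delta function at [y] shows that the adjoint acts as [J]. *)
Lemma adjoint_closure_jacobi u w : adjoint (closure Gr) u w -> forall y, w y = jac u y.
Proof.
  intros [_ [_ Hadj]] y.
  set (d := fun x => if eq_dec_classic x y then ((1, 0) : Defs.C) else C0).
  assert (Hd : forall x, ~ In x [y] -> d x = C0).
  { intros x Hx. unfold d. destruct (eq_dec_classic x y); subst; simpl in Hx; tauto. }
  assert (Jd : forall x, jac d x = Cscal (jacobi_entry y x) (1, 0)).
  { intro x. rewrite (jacobi_as_sum d x [y]) by (repeat constructor; auto).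
    simpl. unfold d. destruct (eq_dec_classic y y); [|congruence]. rewrite jacobi_entry_sym. Cring. }
  assert (E : csum (neighbours y) (fun x => Cmul (jac d x) (Cconj (u x))) =
              csum [y] (fun x => Cmul (d x) (Cconj (w x)))).
  { apply (Hadj d (jac d)).
    - apply jacobi_graph_closure. exists [y]; auto.
    - apply has_sum_finite; [apply NoDup_nodup|]. intros x Hx.
      rewrite Jd, jacobi_entry_out; auto. Cring.
    - apply has_sum_finite; [repeat constructor; auto|]. intros x Hx. rewrite Hd; auto. Cring. }
  rewrite (csum_ext _ _ (fun x => Cconj (Cscal (jacobi_entry y x) (u x)))) in E
    by (intros; rewrite Jd; Cring).
  rewrite csum_conj, <- jacobi_neighbours in E. simpl in E. unfold d in E.
  destruct (eq_dec_classic y y); [|congruence].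
  destruct (jac u y) as [p q], (w y) as [p' q']. Cunfold. simpl in E. injection E as E1 E2.
  f_equal; lra.
Qed.

Section Path.
Variable level : V -> nat.
Hypothesis level_parent : forall x, level (parent x) = S (level x).
Hypothesis connected : forall x y, clos_refl_trans V (tree_adj parent) x y.
Variable xs : nat -> V.
Hypothesis xs_level : forall n, level (xs n) = n.
Hypothesis xs_parent : forall n, parent (xs n) = xs (S n).

Definition below (m : nat) (x : V) : Prop := exists k, Nat.iter k parent x = xs m.

Definition below_ind (m : nat) (x : V) : R :=
  if excluded_middle_informative (below m x) then 1 else 0.

Lemma level_iter_parent k x : level (Nat.iter k parent x) = (level x + k)%nat.
Proof. induction k; simpl; [lia | rewrite level_parent, IHk; lia]. Qed.

Lemma below_level m x : below m x -> (level x <= m)%nat.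
Proof. intros [k Hk]. pose proof (level_iter_parent k x). rewrite Hk, xs_level in H. lia. Qed.

Lemma xs_inj a b : xs a = xs b -> a = b.
Proof. intro H. rewrite <- (xs_level a), <- (xs_level b), H. reflexivity. Qed.

Lemma below_mono m m' x : (m <= m')%nat -> below m x -> below m' x.
Proof.
  induction 1 as [|m' _ IH]; auto. intros Hx. destruct (IH Hx) as [k Hk].
  exists (S k). simpl. rewrite Hk. apply xs_parent.
Qed.

Lemma below_xs m k : below m (xs k) <-> (k <= m)%nat.
Proof.
  split; intros H.
  - apply below_level in H. rewrite xs_level in H. exact H.
  - apply (below_mono k); auto. exists 0%nat. reflexivity.
Qed.

Lemma below_parent m x : x <> xs m -> below m (parent x) <-> below m x.
Proof.
  intros Hx. split; intros [k Hk].
  - exists (S k). rewrite Nat.iter_succ_r. exact Hk.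
  - destruct k as [|k]; [contradiction|]. exists k. rewrite <- Nat.iter_succ_r. exact Hk.
Qed.

Lemma below_exists x : exists m, below m x.
Proof.
  assert (Hpath : forall a b, clos_refl_trans V (tree_adj parent) a b ->
    (exists m, below m a) -> exists m, below m b).
  { induction 1 as [a b [Hab | Hba] | | ]; auto; intros [m Hm].
    - exists (S m). subst b. apply below_parent; [| apply (below_mono m); auto].
      intros ->. apply below_xs in Hm. lia.
    - exists m. apply (below_parent m b); [| rewrite Hba; exact Hm].
      intros ->. rewrite <- Hba, xs_parent, below_xs in Hm. lia. }
  apply (Hpath (xs 0%nat)); auto. exists 0%nat, 0%nat. reflexivity.
Qed.

Lemma below_list (l : list V) : exists M, forall x, In x l -> below M x.
Proof.
  induction l as [|a l [M HM]]; [exists 0%nat; simpl; tauto|].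
  destruct (below_exists a) as [m Hm]. exists (Nat.max m M). intros x [<- | Hx].
  - apply (below_mono m); auto; lia.
  - apply (below_mono M); auto; lia.
Qed.

Fixpoint subtree (x : V) (n : nat) : list V :=
  match n with
  | O => [x]
  | S n' => x :: flat_map (fun y => subtree y n') (children x)
  end.

Lemma in_subtree k x : forall y n, Nat.iter k parent x = y -> (k <= n)%nat -> In x (subtree y n).
Proof.
  induction k; intros y n Hk Hn.
  - simpl in Hk. subst. destruct n; simpl; auto.
  - destruct n; [lia|]. simpl. right. apply in_flat_map.
    exists (Nat.iter k parent x). split; [apply children_spec, Hk | apply IHk; auto; lia].
Qed.

Lemma below_in_subtree m x : below m x -> In x (subtree (xs m) m).
Proof.
  intros [k Hk]. apply (in_subtree k); auto.
  pose proof (level_iter_parent k x). rewrite Hk, xs_level in H. lia.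
Qed.

Lemma below_ind_one m x : below m x -> below_ind m x = 1.
Proof. unfold below_ind; destruct (excluded_middle_informative (below m x)); tauto. Qed.

Lemma below_ind_zero m x : ~ below m x -> below_ind m x = 0.
Proof. unfold below_ind; destruct (excluded_middle_informative (below m x)); tauto. Qed.

Lemma below_ind_range m x : 0 <= below_ind m x <= 1.
Proof. unfold below_ind; destruct (excluded_middle_informative (below m x)); lra. Qed.

Lemma below_ind_xs m k : below_ind m (xs k) = if le_dec k m then 1 else 0.
Proof.
  destruct (le_dec k m); [apply below_ind_one | apply below_ind_zero]; rewrite below_xs; auto.
Qed.

Lemma summable_tail h B : (forall x, 0 <= h x) -> (forall l, NoDup l -> rsum l h <= B) ->
  forall eps, 0 < eps -> exists M, forall l, NoDup l ->
    rsum l (fun x => (1 - below_ind M x) * h x) <= eps.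
Proof.
  intros Hh HB eps He.
  destruct (summable_concentrated h B Hh HB eps He) as [l0 Hl0].
  destruct (below_list l0) as [M HM]. exists M. intros l Nl.
  rewrite (rsum_filter l _ (fun x => negb (inb l0 x))).
  2:{ intros x _ Hx. apply Bool.negb_false_iff, inb_true in Hx. rewrite below_ind_one; auto. ring. }
  apply Rle_trans with (rsum (filter (fun x => negb (inb l0 x)) l) h).
  - apply rsum_le. intros x _. pose proof (below_ind_range M x). pose proof (Hh x). nra.
  - apply Hl0; [apply NoDup_filter, Nl|]. intros x Hx.
    apply filter_In in Hx as [_ Hx]. apply inb_false, Bool.negb_true_iff, Hx.
Qed.

Lemma rsum_map_xs (g : V -> R) n : rsum (map xs (seq 0 (S n))) g = sum_f_R0 (fun k => g (xs k)) n.
Proof.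
  induction n as [|n IH]; [simpl; ring|].
  rewrite seq_S, map_app, rsum_app, IH. simpl. ring.
Qed.

Lemma NoDup_map_xs n : NoDup (map xs (seq 0 n)).
Proof. apply FinFun.Injective_map_NoDup; [intros a b; apply xs_inj | apply seq_NoDup]. Qed.

Lemma l2_path_bound u : l2 u ->
  exists B, 0 <= B /\ forall n, sum_f_R0 (fun k => Cnorm2 (u (xs k))) n <= B.
Proof.
  intros Hu. destruct (l2_bound u Hu) as [B [B0 HB]]. exists B. split; auto.
  intro n. rewrite <- (rsum_map_xs (fun x => Cnorm2 (u x))). apply HB, NoDup_map_xs.
Qed.

Lemma rsum_path_supported (g : V -> R) l : NoDup l -> (forall x, 0 <= g x) ->
  (forall x, (forall k, x <> xs k) -> g x = 0) ->
  exists K, rsum l g <= sum_f_R0 (fun k => g (xs k)) K.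
Proof.
  intros Nl Hg Hoff. exists (list_max (map level l)). rewrite <- rsum_map_xs.
  apply rsum_supp_le; auto using NoDup_map_xs. intros x Hx Hout. apply Hoff.
  intros k ->. apply Hout, in_map, in_seq. split; [lia|].
  assert (Hall := proj1 (list_max_le (map level l) _) (le_n _)).
  rewrite Forall_forall in Hall. specialize (Hall (level (xs k)) (in_map _ _ _ Hx)).
  rewrite xs_level in Hall. lia.
Qed.

Lemma parent_eq_xs y k : parent y = xs k -> (forall j, y <> xs j) \/ (exists j, k = S j /\ y = xs j).
Proof.
  intros Hy. destruct (classic (exists j, y = xs j)) as [[j ->] | Hoff].
  - right. exists j. split; auto. apply xs_inj. rewrite <- Hy, xs_parent. reflexivity.
  - left. intros j ->. eauto.
Qed.

(* Being constant along edges off the path, a cutoff commutes with [J] up to terms on the path. *)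
Record cutoff (M : nat) (delta : R) (ph : V -> R) : Prop := {
  cutoff_support : exists L, forall x, ~ In x L -> ph x = 0;
  cutoff_range : forall x, 0 <= ph x <= 1;
  cutoff_below : forall x, below M x -> ph x = 1;
  cutoff_off_path : forall x, (forall k, x <> xs k) -> ph (parent x) = ph x;
  cutoff_slope : forall k, Rabs (lam (xs k) * (ph (xs k) - ph (xs (S k)))) <= delta }.

Lemma cutoff_compl_le M delta ph x a : cutoff M delta ph ->
  Cnorm2 (Cscal (1 - ph x) a) <= (1 - below_ind M x) * Cnorm2 a.
Proof.
  intros Hph. rewrite Cnorm2_scal. pose proof (Cnorm2_ge0 a).
  destruct (classic (below M x)) as [Hx | Hx].
  - rewrite (cutoff_below _ _ _ Hph x Hx), below_ind_one by exact Hx. nra.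
  - rewrite below_ind_zero by exact Hx. pose proof (cutoff_range _ _ _ Hph x).
    apply Rmult_le_compat_r; nra.
Qed.

Definition commutator (ph : V -> R) (u : V -> Defs.C) (x : V) : Defs.C :=
  Csub (jac (fun y => Cscal (ph y) (u y)) x) (Cscal (ph x) (jac u x)).

Lemma commutator_eq ph u x : commutator ph u x =
  Cadd (Cscal (lam x * (ph (parent x) - ph x)) (u (parent x)))
       (csum (children x) (fun y => Cscal (lam y * (ph y - ph x)) (u y))).
Proof.
  unfold commutator, jacobi.
  replace (csum (children x) (fun y => Cscal (lam y * (ph y - ph x)) (u y))) with
    (Csub (csum (children x) (fun y => Cscal (lam y) (Cscal (ph y) (u y))))
          (Cscal (ph x) (csum (children x) (fun y => Cscal (lam y) (u y)))))
    by (rewrite <- csum_scal, <- csum_sub; apply csum_ext; intros; Cring).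
  Cring.
Qed.

Section Commutator.
Variables (M : nat) (delta : R) (ph : V -> R) (u : V -> Defs.C).
Hypothesis ph_cutoff : cutoff M delta ph.

Lemma commutator_child_off_path x y : In y (children x) -> (forall j, y <> xs j) ->
  Cscal (lam y * (ph y - ph x)) (u y) = C0.
Proof.
  intros Hy Hoff. apply children_spec in Hy. subst x.
  rewrite (cutoff_off_path _ _ _ ph_cutoff y Hoff). Cring.
Qed.

Lemma commutator_off_path x : (forall k, x <> xs k) -> commutator ph u x = C0.
Proof.
  intros Hx. rewrite commutator_eq, (cutoff_off_path _ _ _ ph_cutoff x Hx), csum_zero; [Cring|].
  intros y Hy. apply commutator_child_off_path; auto.
  intros j ->. apply (Hx (S j)). symmetry. rewrite <- xs_parent. apply children_spec, Hy.
Qed.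

Lemma commutator_xs_le k : Cnorm2 (commutator ph u (xs k)) <=
  2 * (delta * delta) * (Cnorm2 (u (xs (S k))) + match k with O => 0 | S j => Cnorm2 (u (xs j)) end).
Proof.
  assert (Hup : Rabs (lam (xs k) * (ph (xs (S k)) - ph (xs k))) <= delta).
  { rewrite <- Rabs_Ropp. replace (- _) with (lam (xs k) * (ph (xs k) - ph (xs (S k)))) by ring.
    apply (cutoff_slope _ _ _ ph_cutoff). }
  assert (Hd : 0 <= delta * delta) by nra.
  pose proof (Cnorm2_ge0 (u (xs (S k)))).
  rewrite commutator_eq, xs_parent. destruct k as [|j].
  - rewrite csum_zero.
    + replace (Cadd _ C0) with (Cscal (lam (xs 0) * (ph (xs 1) - ph (xs 0))) (u (xs 1))) by Cring.
      eapply Rle_trans; [apply Cnorm2_scal_le, Hup | nra].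
    + intros y Hy. apply commutator_child_off_path; auto.
      destruct (parent_eq_xs y 0) as [Hoff | [j [Hj _]]]; [apply children_spec, Hy | exact Hoff | lia].
  - rewrite (csum_single _ _ (xs j)); auto.
    + eapply Rle_trans; [apply Cnorm2_add_le|].
      pose proof (Cnorm2_scal_le _ (u (xs (S (S j)))) _ Hup).
      pose proof (Cnorm2_scal_le _ (u (xs j)) _ (cutoff_slope _ _ _ ph_cutoff j)).
      lra.
    + apply children_spec, xs_parent.
    + intros y Hy Hne. apply commutator_child_off_path; auto.
      destruct (parent_eq_xs y (S j)) as [Hoff | [j' [Hj ->]]]; [apply children_spec, Hy | exact Hoff |].
      injection Hj as ->. contradiction.
Qed.

Lemma commutator_norm2_le B : (forall n, sum_f_R0 (fun k => Cnorm2 (u (xs k))) n <= B) ->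
  forall l, NoDup l -> rsum l (fun x => Cnorm2 (commutator ph u x)) <= 4 * (delta * delta) * B.
Proof.
  intros HB l Nl.
  destruct (rsum_path_supported (fun x => Cnorm2 (commutator ph u x)) l Nl) as [K HK].
  - intros; apply Cnorm2_ge0.
  - intros x Hx. rewrite commutator_off_path by exact Hx. apply Cnorm2_C0.
  - eapply Rle_trans; [apply HK|]. eapply Rle_trans; [apply sum_Rle; intros k _; apply commutator_xs_le|].
    replace (sum_f_R0 _ K) with (2 * (delta * delta) * (sum_f_R0 (fun k => Cnorm2 (u (xs (S k)))) K +
      sum_f_R0 (fun k => match k with O => 0 | S j => Cnorm2 (u (xs j)) end) K))
      by (rewrite <- plus_sum, scal_sum; apply sum_eq; intros; ring).
    assert (Hd : 0 <= delta * delta) by nra.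
    pose proof (sum_shift_le (fun k => Cnorm2 (u (xs k))) B K (fun k => Cnorm2_ge0 _) HB).
    pose proof (sum_pred_le (fun k => Cnorm2 (u (xs k))) B K (fun k => Cnorm2_ge0 _) HB).
    nra.
Qed.

End Commutator.

Section Construction.
Hypothesis lam_pos : forall x, 0 < lam x.
Hypothesis divergence : cv_infty (fun n => sum_f_R0 (fun k => / lam (xs (S k))) n).

Definition inv_lam_sum (n : nat) : R := sum_f_R0 (fun k => / lam (xs (S k))) n.

(* The cutoff drops by [c / lam (xs m)] when passing from [xs (m - 1)] to [xs m], for
   [M + 1 < m <= N + 1]; the total drop is [c] times a block of the divergent series. *)
Definition path_weight (M : nat) (c : R) (m : nat) : R :=
  if (S M <? m)%nat then c / lam (xs m) else 0.

Definition path_cutoff (M N : nat) (c : R) (x : V) : R :=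
  sum_f_R0 (fun m => path_weight M c m * below_ind m x) (S N).

Lemma path_weight_slope M c m : 0 <= c -> 0 <= lam (xs m) * path_weight M c m <= c.
Proof.
  intros Hc. unfold path_weight. destruct (S M <? m)%nat; [|lra].
  pose proof (lam_pos (xs m)). replace (lam (xs m) * (c / lam (xs m))) with c by (field; lra). lra.
Qed.

Lemma path_weight_ge0 M c m : 0 <= c -> 0 <= path_weight M c m.
Proof.
  intros Hc. pose proof (path_weight_slope M c m Hc). pose proof (lam_pos (xs m)).
  apply (Rmult_le_reg_l (lam (xs m))); lra.
Qed.

Lemma path_weight_total M N c : (M <= N)%nat ->
  sum_f_R0 (path_weight M c) (S N) = c * (inv_lam_sum N - inv_lam_sum M).
Proof.
  intros HMN. replace N with (M + (N - M))%nat by lia. induction (N - M)%nat as [|d IH].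
  - rewrite Nat.add_0_r, Rminus_diag, Rmult_0_r.
    rewrite (sum_eq _ (fun _ => 0)), sum_cte; [ring|].
    intros m Hm. unfold path_weight. destruct (S M <? m)%nat eqn:E; auto.
    apply Nat.ltb_lt in E. lia.
  - replace (M + S d)%nat with (S (M + d)) by lia.
    rewrite tech5, IH. unfold inv_lam_sum. rewrite tech5. fold (inv_lam_sum (M + d)).
    unfold path_weight. replace (S M <? S (S (M + d)))%nat with true by (symmetry; apply Nat.ltb_lt; lia).
    unfold Rdiv. ring.
Qed.

Lemma path_cutoff_below M N c x : below M x -> path_cutoff M N c x = sum_f_R0 (path_weight M c) (S N).
Proof.
  intros Hx. apply sum_eq. intros m _. unfold path_weight.
  destruct (S M <? m)%nat eqn:E; [|ring].
  apply Nat.ltb_lt in E. rewrite below_ind_one; [ring|]. apply (below_mono M); auto; lia.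
Qed.

Lemma path_cutoff_out M N c x : ~ below (S N) x -> path_cutoff M N c x = 0.
Proof.
  intros Hx. unfold path_cutoff. rewrite (sum_eq _ (fun _ => 0)), sum_cte; [ring|].
  intros m Hm. rewrite below_ind_zero; [ring|]. intro Hm'. apply Hx, (below_mono m); auto.
Qed.

Lemma path_cutoff_parent M N c x : (forall k, x <> xs k) ->
  path_cutoff M N c (parent x) = path_cutoff M N c x.
Proof.
  intros Hx. apply sum_eq. intros m _. unfold below_ind.
  pose proof (below_parent m x (Hx m)).
  destruct (excluded_middle_informative (below m (parent x))),
    (excluded_middle_informative (below m x)); tauto.
Qed.

Lemma sum_indicator (f : nat -> R) k n :
  sum_f_R0 (fun m => if Nat.eq_dec m k then f m else 0) n = if le_dec k n then f k else 0.
Proof.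
  induction n as [|n IH]; cbn [sum_f_R0].
  - destruct (Nat.eq_dec 0 k), (le_dec k 0); subst; auto; lia.
  - rewrite IH. destruct (Nat.eq_dec (S n) k), (le_dec k n), (le_dec k (S n)); subst; try lia; ring.
Qed.

Lemma path_cutoff_step M N c k :
  path_cutoff M N c (xs k) - path_cutoff M N c (xs (S k)) =
  if le_dec k (S N) then path_weight M c k else 0.
Proof.
  unfold path_cutoff. rewrite <- minus_sum, <- sum_indicator. apply sum_eq. intros m _.
  rewrite !below_ind_xs. destruct (le_dec k m), (le_dec (S k) m), (Nat.eq_dec m k); try ring; lia.
Qed.

Lemma cutoff_exists M delta : 0 < delta -> exists ph, cutoff M delta ph.
Proof.
  intros Hdelta.
  destruct (divergence (inv_lam_sum M + / delta)) as [N0 HN0].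
  set (N := Nat.max N0 M).
  specialize (HN0 N (Nat.le_max_l _ _)). change (inv_lam_sum M + / delta < inv_lam_sum N) in HN0.
  set (c := / (inv_lam_sum N - inv_lam_sum M)).
  assert (Hinv : 0 < / delta) by (apply Rinv_0_lt_compat, Hdelta).
  assert (Hc0 : 0 < c) by (apply Rinv_0_lt_compat; lra).
  assert (Hc : c <= delta).
  { rewrite <- (Rinv_inv delta). apply Rlt_le, Rinv_lt_contravar; [nra | lra]. }
  assert (Htotal : sum_f_R0 (path_weight M c) (S N) = 1)
    by (rewrite path_weight_total by lia; unfold c; field; lra).
  exists (path_cutoff M N c). split.
  - exists (subtree (xs (S N)) (S N)). intros x Hx.
    apply path_cutoff_out. intro Hb. apply Hx, below_in_subtree, Hb.
  - intros x. split.
    + apply cond_pos_sum. intros m. apply Rmult_le_pos; [apply path_weight_ge0; lra | apply below_ind_range].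
    + rewrite <- Htotal. apply sum_Rle. intros m _.
      pose proof (path_weight_ge0 M c m ltac:(lra)). pose proof (below_ind_range m x). nra.
  - intros x Hx. rewrite path_cutoff_below; auto.
  - apply path_cutoff_parent.
  - intros k. rewrite path_cutoff_step. destruct (le_dec k (S N)).
    + pose proof (path_weight_slope M c k ltac:(lra)). rewrite Rabs_pos_eq; lra.
    + rewrite Rmult_0_r, Rabs_R0. lra.
Qed.

Lemma adjoint_sub_closure u w : adjoint (closure Gr) u w -> closure Gr u w.
Proof.
  intros Hadj. pose proof (adjoint_closure_jacobi u w Hadj) as Hwu.
  destruct Hadj as [Hu [Hw _]]. split; [exact Hu | split; [exact Hw |]]. intros eps He.
  destruct (l2_path_bound u Hu) as [B [B0 HB]].
  destruct (l2_bound u Hu) as [Bu [_ HBu]], (l2_bound w Hw) as [Bw [_ HBw]].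
  set (h := fun x => Cnorm2 (u x) + Cnorm2 (w x)).
  assert (Hu_h : forall x, Cnorm2 (u x) <= h x) by (intro x; pose proof (Cnorm2_ge0 (w x)); unfold h; lra).
  assert (Hw_h : forall x, Cnorm2 (w x) <= h x) by (intro x; pose proof (Cnorm2_ge0 (u x)); unfold h; lra).
  destruct (summable_tail h (Bu + Bw)) with (eps := eps / 4) as [M HM].
  { intro x. pose proof (Hu_h x). pose proof (Cnorm2_ge0 (u x)). lra. }
  { intros l Nl. unfold h. rewrite rsum_plus. specialize (HBu l Nl). specialize (HBw l Nl). lra. }
  { lra. }
  set (delta := Rmin 1 (eps / (16 * (B + 1)))).
  assert (Hdelta : 0 < delta) by (apply Rmin_glb_lt; [lra | apply Rdiv_lt_0_compat; lra]).
  assert (Hdelta1 : delta <= 1) by apply Rmin_l.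
  assert (Hdelta2 : delta * (16 * (B + 1)) <= eps).
  { apply (Rmult_le_reg_r (/ (16 * (B + 1)))); [apply Rinv_0_lt_compat; lra|].
    rewrite Rmult_assoc, Rinv_r by lra. rewrite Rmult_1_r. apply Rmin_r. }
  destruct (cutoff_exists M delta Hdelta) as [ph Hph].
  assert (Hcompl : forall x a, Cnorm2 a <= h x ->
    Cnorm2 (Cscal (1 - ph x) a) <= (1 - below_ind M x) * h x).
  { intros x a Ha. eapply Rle_trans; [apply (cutoff_compl_le M delta), Hph|].
    pose proof (below_ind_range M x). apply Rmult_le_compat_l; lra. }
  exists (fun x => Cscal (ph x) (u x)), (jac (fun x => Cscal (ph x) (u x))).
  split; [split; [| reflexivity] | split; intros l Nl; specialize (HM l Nl)].
  - destruct (cutoff_support _ _ _ Hph) as [L HL]. exists L. intros x Hx. rewrite HL by exact Hx. Cring.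
  - apply Rle_trans with (rsum l (fun x => (1 - below_ind M x) * h x)); [|lra].
    apply rsum_le. intros x _.
    replace (Csub (u x) (Cscal (ph x) (u x))) with (Cscal (1 - ph x) (u x)) by Cring.
    apply Hcompl, Hu_h.
  - pose proof (commutator_norm2_le M delta ph u Hph B HB l Nl).
    apply Rle_trans with (rsum l (fun x => 2 * ((1 - below_ind M x) * h x) +
                                          2 * Cnorm2 (commutator ph u x))).
    + apply rsum_le. intros x _.
      replace (Csub (w x) (jac (fun y => Cscal (ph y) (u y)) x))
        with (Csub (Cscal (1 - ph x) (w x)) (commutator ph u x))
        by (unfold commutator; rewrite Hwu; Cring).
      pose proof (Hcompl x (w x) (Hw_h x)). pose proof (Cnorm2_sub_le (Cscal (1 - ph x) (w x)) (commutator ph u x)).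
      lra.
    + rewrite rsum_plus, !rsum_scal. nra.
Qed.

End Construction.
End Path.
End Jacobi.

Theorem theorem6 (V : Type) (level : V -> nat) (parent : V -> V)
  (children : V -> list V) (lam beta : V -> R)
  (Hlev : forall x, level (parent x) = S (level x))
  (Hch : forall x y, In y (children x) <-> parent y = x)
  (Hnodup : forall x, NoDup (children x))
  (Hne : forall x, (1 <= level x)%nat -> children x <> nil)
  (Hconn : forall x y, clos_refl_trans V (tree_adj parent) x y)
  (Hlam : forall x, 0 < lam x)
  (xs : nat -> V)
  (Hxlev : forall n, level (xs n) = n)
  (Hxpath : forall n, parent (xs n) = xs (S n))
  (Hdiv : cv_infty (fun N => sum_f_R0 (fun k => / lam (xs (S k))) N)) :
  ess_selfadjoint (jacobi_graph parent children lam beta).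
Proof.
  intros u w. split.
  - eapply adjoint_sub_closure; eauto.
  - apply closure_sub_adjoint. intros v1 z1 v2 z2. apply jacobi_graph_symmetric; auto.
Qed.
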